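(* Let $(M,S)$ be a covered map where $M$ is bipartite, and let $(M,(I,O))=\Delta(M,S)$. The orientation $(I,O)$ is the geodesic orientation of $M$ if and only if $M_{|S}$ is the rightmost BFS tree of $M$.
   Context: Permutations compose right to left. A map is $M=(H,\sigma,\alpha)$, $H$ finite, $\alpha$ fixed-point-free involution, $\sigma$ permutation (its cycles give the counterclockwise order of half-edges around each vertex), $\langle\sigma,\alpha\rangle$ transitive, root $r\in H$; $\phi=\sigma\alpha$. $\pi_{|S}$ is obtained from the cycles of $\pi$ by erasing elements not in $S$. A covered map is $(M,S)$ with $S$ stable by $\alpha$ and $M_{|S}=(S,\sigma_{|S},\alpha_{|S})$ a connecting unicellular map ($\sigma_{|S},\alpha_{|S}$ transitive on $S$, $S$ meets every cycle of $\sigma$ — $S=\emptyset$ allowed if $\sigma$ has one cycle — and $\sigma_{|S}\alpha_{|S}$ cyclic). The motion function $\theta(h)=\sigma\alpha(h)$ ($h\in S$), $\sigma(h)$ ($h\notin S$) is cyclic and gives the order $r\prec_S\theta(r)\prec_S\cdots\prec_S\theta^{|H|-1}(r)$. $\Delta(M,S)=(M,(I,O))$ with $I=\{h\in S:\alpha(h)\prec_S h\}\cup\{h\notin S:h\prec_S\alpha(h)\}$, $O=H\setminus I$; an edge is oriented from the vertex of its half-edge in $O$ to the vertex of its half-edge in $I$. Let $d(v)$ be the graph distance from the root-vertex (vertex containing $r$). In a bipartite map adjacent vertices $u,v$ satisfy $|d(u)-d(v)|=1$; the geodesic orientation orients each edge from its endpoint with smaller $d$ to its endpoint with larger $d$ (so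 the ingoing half-edge is the one at the vertex with larger $d$). The rightmost BFS tree $T$ is built as follows: initially all vertices are alive and $T$ consists of the root-vertex only; repeatedly, take the alive vertex $v$ that has been in $T$ for the longest time, declare it dead, and inspect its half-edges in the counterclockwise order given by $\sigma$ — starting from $r$ if $v$ is the root-vertex, and otherwise starting from the half-edge following (under $\sigma$) the half-edge of $v$ on the tree edge joining $v$ to its parent — and whenever an inspected half-edge $h$ leads (via $\alpha(h)$) to a vertex not yet in $T$, add that vertex and the edge $\{h,\alpha(h)\}$ to $T$; stop when all vertices are dead. $M_{|S}$ being the rightmost BFS tree means $S$ is the set of half-edges of the edges of $T$. *)

From mathcomp Require Import all_boot.
From mathcomp Require Import perm.

Set Implicit Arguments.
Unset Strict Implicit.
Unset Printing Implicit Defensive.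

(* Half-edges form a finite type H; sigma, alpha are permutations of H.     *)
(* Vertices are the sigma-cycles, edges the alpha-cycles.                   *)

(* pi_{|S}(h): the first element of S among pi h, pi^2 h, ... (meaningful
   for h in S; pi^(order) h = h and order <= #|H|, so the list is nonempty) *)
Definition restr (H : finType) (p : H -> H) (S : {set H}) (h : H) : H :=
  head h [seq x <- traject p (p h) #|H| | x \in S].

Definition is_map (H : finType) (s a : {perm H}) : Prop :=
  [/\ (forall h, a (a h) = h), (forall h, a h != h) &
      (forall x y, connect (fun u v => (v == s u) || (v == a u)) x y)].

Definition connecting_unicellular (H : finType) (s a : {perm H}) (S : {set H})
  : Prop :=
  [/\ (forall h, exists2 h', h' \in S & fconnect s h h')
        \/ (S = set0 /\ forall x y, fconnect s x y),
      (forall x y, x \in S -> y \in S ->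
         connect (fun u v => (u \in S) &&
                   ((v == restr s S u) || (v == restr a S u))) x y) &
      (forall x y, x \in S -> y \in S ->
         fconnect (fun u => restr s S (restr a S u)) x y)].

Definition covered (H : finType) (s a : {perm H}) (S : {set H}) : Prop :=
  (forall h, (a h \in S) = (h \in S)) /\ connecting_unicellular s a S.

Definition theta (H : finType) (s a : {perm H}) (S : {set H}) (h : H) : H :=
  if h \in S then s (a h) else s h.

Definition precS (H : finType) (s a : {perm H}) (r : H) (S : {set H}) (x y : H)
  : bool := findex (theta s a S) r x < findex (theta s a S) r y.

Definition Iset (H : finType) (s a : {perm H}) (r : H) (S : {set H}) : {set H} :=
  [set h | ((h \in S) && precS s a r S (a h) h)
        || ((h \notin S) && precS s a r S h (a h))].

Definition reach (H : finType) (s a : {perm H}) (r : H) (n : nat) : {set H} :=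
  iter n (fun A => A :|: [set h | [exists h' in A, fconnect s (a h') h]])
       [set h | fconnect s r h].

Definition dist (H : finType) (s a : {perm H}) (r : H) (h : H) : nat :=
  find (fun n => h \in reach s a r n) (iota 0 #|H|).

Definition geo_in (H : finType) (s a : {perm H}) (r : H) : {set H} :=
  [set h | dist s a r (a h) < dist s a r h].

Definition bipartite (H : finType) (s a : {perm H}) : Prop :=
  exists c : H -> bool, (forall h, c (s h) = c h) /\ (forall h, c (a h) != c h).

(* State: (half-edges of vertices in T, half-edges of edges
   of T, newly discovered vertices). A vertex in the queue is represented by
   the half-edge from which its inspection starts. *)
Definition scan_step (H : finType) (s a : {perm H})
  (st : {set H} * {set H} * seq H) (h : H) : {set H} * {set H} * seq H :=
  let: (vis, T, nq) := st in
  if a h \in vis then st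
  else (vis :|: [set x | fconnect s (a h) x], T :|: [set h; a h],
        rcons nq (s (a h))).

Fixpoint bfs_loop (H : finType) (s a : {perm H}) (fuel : nat) (q : seq H)
  (vis T : {set H}) : {set H} :=
  match fuel, q with
  | 0, _ => T
  | _, [::] => T
  | n.+1, st :: q' =>
      let: (vis', T', nq) :=
         foldl (scan_step s a) (vis, T, [::]) (traject s st (order s st)) in
      bfs_loop s a n (q' ++ nq) vis' T'
  end.

Definition rbfs_tree (H : finType) (s a : {perm H}) (r : H) : {set H} :=
  bfs_loop s a #|H| [:: r] [set x | fconnect s r x] set0.

(* The rightmost BFS tree T gives every half-edge h an address: the offsets,
   around the successive vertices of the tree path from the root vertex, of the
   half-edges followed down that path, extended by the offset of h around its
   own vertex.  The motion function of T increases addresses lexicographically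
   except when it comes back to the root half-edge, so it is cyclic and <_T is
   the lexicographic order of addresses.  The address of a half-edge starts
   with that of the tree path to its vertex, so comparing the two half-edges of
   an edge compares the depths of its ends; in a bipartite map these differ by
   one, and the depth in T is the distance.  Hence Delta(M, T) is geodesic.
   Conversely S is read off its orientation along the cycle of theta_T: if
   theta_S and theta_T agree for t steps, the orientation of the edge at the
   t-th half-edge forces whether it lies in S, so the next steps agree too. *)

From mathcomp Require Import all_boot all_order perm.
Import Order.TTheory Order.DefaultSeqLexiOrder.

Set Implicit Arguments.
Unset Strict Implicit.
Unset Printing Implicit Defensive.

Section LexicographicWords.
Implicit Types (u v : seq nat) (i j : nat).

Lemma ltxi_catl w u v : (w ++ u < w ++ v)%O = (u < v)%O.
Proof. by elim: w => //= x w <-; rewrite eqhead_ltxiE. Qed.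

Lemma ltxi_rcons u i : (u < rcons u i)%O.
Proof. by elim: u => //= x u IH; rewrite eqhead_ltxiE. Qed.

Lemma ltxi_rcons2 u i j : (rcons u i < rcons u j)%O = (i < j).
Proof. by rewrite -!cats1 ltxi_catl ltxi_cons !leEnat ltxx; case: ltngtP. Qed.

Lemma ltxi_rcons_succ u i j : (rcons (rcons u i) j < rcons u i.+1)%O.
Proof. by rewrite -!cats1 -catA ltxi_catl ltxi_cons !leEnat ltnn leqnSn. Qed.

Lemma ltxi_cat_size u v x y : size u = size v -> (u < v)%O -> (u ++ x < v ++ y)%O.
Proof.
elim: u v => [|i u IH] [|j v] //= [] /IH {}IH.
by rewrite !ltxi_cons => /andP[-> /implyP lt]; apply/implyP => /lt/IH.
Qed.

End LexicographicWords.

Section IncreasingPotential.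
Variables (T : finType) (disp : Order.disp_t) (P : porderType disp).
Variables (f : T -> T) (w : T -> P) (r : T).
Hypothesis f_inj : injective f.
Hypothesis w_increasing : forall x, f x != r -> (w x < w (f x))%O.

Lemma lt_iter_potential x k : ~~ fconnect f x r -> (w x < w (iter k.+1 f x))%O.
Proof.
move=> xNr; have iterNr n : iter n f x != r.
  by apply: contraNneq xNr => <-; apply: fconnect_iter.
elim: k => [|k IH]; first exact: w_increasing (iterNr 1).
by apply: lt_trans IH (w_increasing _); rewrite -iterS.
Qed.

Lemma fconnect_potential x : fconnect f r x.
Proof.
rewrite (fconnect_sym f_inj); apply/negPn/negP => /lt_iter_potential.
by move/(_ (order f x).-1); rewrite orderSpred (iter_order f_inj) ltxx.
Qed.

Lemma lt_iter_orbitS t : t.+1 < order f r ->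
  (w (iter t f r) < w (iter t.+1 f r))%O.
Proof.
move=> lt_o; apply: w_increasing; rewrite -iterS; apply/eqP => fr.
by have := findex_iter lt_o; rewrite fr findex0.
Qed.

Lemma lt_iter_orbit t t' : t < t' < order f r ->
  (w (iter t f r) < w (iter t' f r))%O.
Proof.
case/andP; elim: t' => // t' IH; rewrite ltnS leq_eqVlt => /orP[/eqP-> | tt'] lt_o.
  exact: lt_iter_orbitS.
exact: lt_trans (IH tt' (ltnW lt_o)) (lt_iter_orbitS lt_o).
Qed.

Lemma findex_potentialE x y : (findex f r x < findex f r y) = (w x < w y)%O.
Proof.
have [fx fy] := (fconnect_potential x, fconnect_potential y).
rewrite -{2}(iter_findex fx) -{2}(iter_findex fy).
case: ltngtP => [lt | gt | ->]; last by rewrite ltxx.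
  by rewrite lt_iter_orbit // lt (findex_max fy).
by rewrite lt_gtF // lt_iter_orbit // gt (findex_max fx).
Qed.

End IncreasingPotential.

Lemma findexS (T : finType) (f : T -> T) x y : injective f -> fconnect f x y ->
  findex f x (f y) = if f y == x then 0 else (findex f x y).+1.
Proof.
move=> f_inj xy; case: ifP => [/eqP-> | fyx]; first exact: findex0.
have fy : f y = iter (findex f x y).+1 f x by rewrite iterS iter_findex.
rewrite fy findex_iter // ltn_neqAle (findex_max xy) andbT.
by apply: contraFneq fyx => o; rewrite fy o (iter_order f_inj).
Qed.

Section BFS.
Variables (H : finType) (s a : {perm H}) (r : H).

Fixpoint bfs_trace (fuel : nat) (q : seq H) (vis T : {set H}) (D : seq H)
  : {set H} * seq H :=
  match fuel, q with
  | 0, _ => (T, D)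
  | _, [::] => (T, D)
  | n.+1, st :: q' =>
      let: (vis', T', nq) :=
         foldl (scan_step s a) (vis, T, [::]) (traject s st (order s st)) in
      bfs_trace n (q' ++ nq) vis' T' (rcons D st)
  end.

Lemma bfs_trace_tree n q vis T D : (bfs_trace n q vis T D).1 = bfs_loop s a n q vis T.
Proof.
elim: n q vis T D => [|n IH] [|st q] vis T D //=.
by case: (foldl _ _ _) => [[vis' T'] nq]; apply: IH.
Qed.

Definition vtx := froot s.

Lemma vtx_eqE x y : (vtx x == vtx y) = fconnect s x y.
Proof. exact/root_connect/fconnect_sym/perm_inj. Qed.

Lemma vtxP x y : reflect (vtx x = vtx y) (fconnect s x y).
Proof. by rewrite -vtx_eqE; apply: eqP. Qed.

Lemma vtx_s x : vtx (s x) = vtx x.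
Proof. exact/esym/vtxP/fconnect1. Qed.

Lemma vtx_sV x : vtx ((s^-1)%g x) = vtx x.
Proof. by rewrite -{2}(permKV s x) vtx_s. Qed.

Definition rank (L : seq H) z := index (vtx z) (map vtx L).
Definition offset (L : seq H) z := findex s (nth r L (rank L z)) z.
Definition discoverer y := a ((s^-1)%g y).

Lemma rank_cat L1 L2 z : vtx z \in map vtx L1 -> rank (L1 ++ L2) z = rank L1 z.
Proof. by rewrite /rank map_cat index_cat => ->. Qed.

Lemma rank_lt L z : (rank L z < size L) = (vtx z \in map vtx L).
Proof. by rewrite /rank -(size_map vtx) index_mem. Qed.

Lemma offset_cat L1 L2 z :
  vtx z \in map vtx L1 -> offset (L1 ++ L2) z = offset L1 z.
Proof. by move=> zL; rewrite /offset rank_cat // nth_cat rank_lt zL. Qed.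

Lemma vtx_nth_rank L z : vtx z \in map vtx L -> vtx (nth r L (rank L z)) = vtx z.
Proof. by move=> zL; rewrite -(nth_map r (vtx r)) ?nth_index // rank_lt. Qed.

Lemma size_uniq_vtx (L : seq H) : uniq (map vtx L) -> size L <= #|H|.
Proof.
move=> u; rewrite -(size_map vtx) cardE; apply: uniq_leq_size => // x _.
by rewrite mem_enum.
Qed.

(* [D ++ q] lists the start half-edges of the dead vertices [D] and of the
   queue [q], in discovery order; the tree edge towards the vertex started at
   [y] is the one through [discoverer y]. *)
Record bfs_inv (D q : seq H) (vis T : {set H}) : Prop := {
  inv_head : nth r (D ++ q) 0 = r /\ 0 < size (D ++ q);
  inv_uniq : uniq (map vtx (D ++ q));
  inv_visited : vis = [set x | vtx x \in map vtx (D ++ q)];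
  inv_tree : forall x, (x \in T) =
    (s x \in behead (D ++ q)) || (s (a x) \in behead (D ++ q));
  inv_parent_dead : forall y, y \in behead (D ++ q) ->
    vtx (discoverer y) \in map vtx D /\
    rank (D ++ q) (discoverer y) < rank (D ++ q) y;
  inv_parent_first : forall y x, y \in behead (D ++ q) -> vtx x = vtx y ->
    vtx (a x) \in map vtx D ->
    (rank (D ++ q) (discoverer y) < rank (D ++ q) (a x)) ||
    ((rank (D ++ q) (discoverer y) == rank (D ++ q) (a x)) &&
     (offset (D ++ q) (discoverer y) <= offset (D ++ q) (a x)));
  inv_parent_fifo : forall y y', y \in behead (D ++ q) -> y' \in behead (D ++ q) ->
    rank (D ++ q) y < rank (D ++ q) y' ->
    (rank (D ++ q) (discoverer y) < rank (D ++ q) (discoverer y')) ||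
    ((rank (D ++ q) (discoverer y) == rank (D ++ q) (discoverer y')) &&
     (offset (D ++ q) (discoverer y) < offset (D ++ q) (discoverer y')));
  inv_dead_closed : forall x, vtx x \in map vtx D -> a x \in vis
}.

Hypothesis aK : forall h, a (a h) = h.

Lemma discoverer_s_a h : discoverer (s (a h)) = h.
Proof. by rewrite /discoverer permK aK. Qed.

Section Scan.
Variables (D q0 : seq H) (st : H) (vis0 T0 : {set H}).
Let L := D ++ st :: q0.
Let O := orbit s st.

(* Invariant of the scan of the vertex started at [st]: [P] is the scanned
   prefix of its half-edges and [nq] the start half-edges discovered so far. *)
Record scan_inv (P : seq H) (vis T : {set H}) (nq : seq H) : Prop := {
  scan_uniq : uniq (map vtx (L ++ nq));
  scan_visited : vis = [set x | vtx x \in map vtx (L ++ nq)];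
  scan_tree : forall x, (x \in T) =
    (s x \in behead (L ++ nq)) || (s (a x) \in behead (L ++ nq));
  scan_discoverer : forall y, y \in nq -> discoverer y \in P;
  scan_sorted : forall i j, i < j -> j < size nq ->
    index (discoverer (nth r nq i)) O < index (discoverer (nth r nq j)) O;
  scan_closed : forall x, x \in P -> a x \in vis;
  scan_first : forall y x, y \in nq -> vtx x = vtx y -> a x \in P ->
    index (discoverer y) O <= index (a x) O
}.

Lemma behead_queue u : behead (L ++ u) = behead L ++ u.
Proof. by rewrite /L; case: D. Qed.

Section ScanStep.
Variables (P rest : seq H) (h : H) (vis T : {set H}) (nq : seq H).
Hypothesis PhO : P ++ h :: rest = O.
Hypothesis J : scan_inv P vis T nq.

Lemma index_scanned : index h O = size P.
Proof.
have : uniq (P ++ h :: rest) by rewrite PhO orbit_uniq.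
rewrite cat_uniq -PhO index_cat => /and3P[_ /hasPn/(_ h (mem_head _ _)) hP _].
by rewrite (negPf hP) /= eqxx addn0.
Qed.

Lemma index_prefix x : x \in P -> index x O < size P.
Proof. by move=> xP; rewrite -PhO index_cat xP index_mem. Qed.

Lemma scan_inv_seen : a h \in vis -> scan_inv (rcons P h) vis T nq.
Proof.
case: J => uniqJ visJ treeJ discJ sortedJ closedJ firstJ ahv; split=> //.
- by move=> y /discJ yP; rewrite mem_rcons inE yP orbT.
- by move=> x; rewrite mem_rcons inE => /orP[/eqP-> | /closedJ].
- move=> y x yn xy; rewrite mem_rcons inE => /orP[/eqP-> | /(firstJ _ _ yn xy) //].
  by rewrite index_scanned ltnW // index_prefix // discJ.
Qed.

Lemma scan_inv_new : a h \notin vis ->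
  scan_inv (rcons P h) (vis :|: [set x | fconnect s (a h) x])
    (T :|: [set h; a h]) (rcons nq (s (a h))).
Proof.
case: J => uniqJ visJ treeJ discJ sortedJ closedJ firstJ ahv.
set y := s (a h).
have yh : discoverer y = h by rewrite discoverer_s_a.
have vy : vtx y = vtx (a h) by rewrite vtx_s.
have vyN : vtx y \notin map vtx (L ++ nq) by move: ahv; rewrite visJ inE vy.
have Ly : L ++ rcons nq y = rcons (L ++ nq) y by rewrite rcons_cat.
split.
- by rewrite Ly map_rcons rcons_uniq vyN uniqJ.
- apply/setP=> x; rewrite !inE Ly map_rcons mem_rcons inE visJ inE orbC.
  by rewrite vy eq_sym vtx_eqE.
- move=> x; rewrite behead_queue !inE treeJ behead_queue !mem_cat mem_rcons !inE.
  rewrite /y !mem_rcons !inE !(inj_eq (@perm_inj _ s)) (inj_eq (@perm_inj _ a)).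
  by case: (s x \in behead L); case: (s x \in nq); case: (s (a x) \in behead L);
     case: (s (a x) \in nq); case: (x == h); case: (x == a h).
- move=> z; rewrite !mem_rcons !inE => /orP[/eqP-> | /discJ ->]; last by rewrite orbT.
  by rewrite yh eqxx.
- move=> i j ij; rewrite size_rcons ltnS leq_eqVlt => /orP[/eqP ej | jlt].
    subst j; rewrite !nth_rcons ltnn eqxx ij yh index_scanned.
    by rewrite index_prefix // discJ // mem_nth.
  by rewrite !nth_rcons jlt (ltn_trans ij jlt) sortedJ.
- move=> x; rewrite mem_rcons inE => /orP[/eqP-> | /closedJ]; rewrite !inE.
    by rewrite connect0 orbT.
  by move=> ->.
- move=> z x; rewrite mem_rcons inE => /orP[/eqP-> | zn].
    rewrite yh vy => vx; rewrite mem_rcons inE => /orP[/eqP-> // | axP].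
    have := closedJ _ axP; rewrite aK visJ inE vx.
    by move: ahv; rewrite visJ inE => /negPf ->.
  move=> vxz; rewrite mem_rcons inE => /orP[/eqP-> | axP]; last exact: firstJ.
  by rewrite index_scanned ltnW // index_prefix // discJ.
Qed.

End ScanStep.

Lemma scan_inv_fold rest P vis T nq : P ++ rest = O -> scan_inv P vis T nq ->
  let: (vis', T', nq') := foldl (scan_step s a) (vis, T, nq) rest in
  scan_inv O vis' T' nq'.
Proof.
elim: rest P vis T nq => [|h rest IH] P vis T nq; first by rewrite cats0 => <-.
move=> PhO J; rewrite /= {1}/scan_step.
case: ifP => [ahv | /negbT ahv]; apply: (IH (rcons P h)); rewrite ?cat_rcons //.
  exact: scan_inv_seen PhO J ahv.
exact: scan_inv_new PhO J ahv.
Qed.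

Lemma scan_inv_init : bfs_inv D (st :: q0) vis0 T0 -> scan_inv [::] vis0 T0 [::].
Proof. by case=> _ uniqI visI treeI _ _ _ _; constructor; rewrite ?cats0. Qed.

Lemma mem_orbit_start x : (x \in O) = (vtx x == vtx st).
Proof. by rewrite /O -fconnect_orbit vtx_eqE (fconnect_sym (@perm_inj _ s)). Qed.

Section ScanDone.
Variables (vis T : {set H}) (nq : seq H).
Hypothesis I : bfs_inv D (st :: q0) vis0 T0.
Hypothesis J : scan_inv O vis T nq.

Lemma vtx_start_notin_dead : vtx st \notin map vtx D.
Proof. by have := inv_uniq I; rewrite map_cat cat_uniq /= => /and3P[_ /norP[]]. Qed.

Lemma rank_at_start z : vtx z = vtx st -> rank (L ++ nq) z = size D.
Proof.
move=> zst; rewrite rank_cat; last by rewrite zst map_cat mem_cat mem_head orbT.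
rewrite /rank zst /L map_cat index_cat (negPf vtx_start_notin_dead) /= eqxx.
by rewrite addn0 size_map.
Qed.

Lemma offset_at_start z : vtx z = vtx st -> offset (L ++ nq) z = index z O.
Proof.
move=> zst; rewrite /offset rank_at_start // nth_cat /L size_cat /= addnS ltnS.
by rewrite leq_addr nth_cat ltnn subnn.
Qed.

Lemma rank_dead z : vtx z \in map vtx D -> rank (L ++ nq) z < size D.
Proof.
move=> zD; rewrite rank_cat; last by rewrite map_cat mem_cat zD.
by rewrite /rank map_cat index_cat zD -(size_map vtx) index_mem.
Qed.

Lemma vtx_new_notin y : y \in nq -> vtx y \notin map vtx L.
Proof.
move=> yn; have := scan_uniq J; rewrite map_cat cat_uniq.
by case/and3P=> _ /hasPn-> //; apply: map_f.
Qed.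

Lemma rank_new y : y \in nq -> rank (L ++ nq) y = size L + index y nq.
Proof.
move=> yn; rewrite /rank map_cat index_cat (negPf (vtx_new_notin yn)) size_map.
have := scan_uniq J; rewrite map_cat cat_uniq => /and3P[_ _ un].
rewrite -{1}(nth_index r yn) -(nth_map r (vtx r)) ?index_mem //.
by rewrite index_uniq // size_map index_mem.
Qed.

Lemma rank_old z : vtx z \in map vtx L -> rank (L ++ nq) z < size L.
Proof. by move=> zL; rewrite rank_cat // rank_lt. Qed.

Lemma vtx_discoverer_new y : y \in nq -> vtx (discoverer y) = vtx st.
Proof. by move=> yn; apply/eqP; rewrite -mem_orbit_start (scan_discoverer J). Qed.

Lemma vtx_dead_queue z : vtx z \in map vtx D -> vtx z \in map vtx L.
Proof. by rewrite /L map_cat mem_cat => ->. Qed.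

Lemma vtx_behead_queue y : y \in behead L -> vtx y \in map vtx L.
Proof. by move=> yL; apply/map_f/mem_behead. Qed.

Lemma vtx_parent_queue y : y \in behead L -> vtx (discoverer y) \in map vtx L.
Proof. by move=> yL; apply: vtx_dead_queue (inv_parent_dead I yL).1. Qed.

Lemma rank_queue z : vtx z \in map vtx L -> rank (L ++ nq) z = rank L z.
Proof. exact: rank_cat. Qed.

Lemma offset_queue z : vtx z \in map vtx L -> offset (L ++ nq) z = offset L z.
Proof. exact: offset_cat. Qed.

Lemma dequeue_parent_dead y : y \in behead (L ++ nq) ->
  vtx (discoverer y) \in map vtx (rcons D st) /\
  rank (L ++ nq) (discoverer y) < rank (L ++ nq) y.
Proof.
rewrite behead_queue mem_cat map_rcons mem_rcons inE => /orP[yL | yn].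
  have [yD lt] := inv_parent_dead I yL; rewrite yD orbT; split=> //.
  by rewrite (rank_queue (vtx_dead_queue yD)) (rank_queue (vtx_behead_queue yL)).
rewrite vtx_discoverer_new // eqxx; split=> //.
rewrite rank_at_start ?vtx_discoverer_new // rank_new // /L size_cat /= addnS ltnS.
exact: leq_trans (leq_addr _ _) (leq_addr _ _).
Qed.

Lemma dequeue_parent_first y x : y \in behead (L ++ nq) -> vtx x = vtx y ->
  vtx (a x) \in map vtx (rcons D st) ->
  (rank (L ++ nq) (discoverer y) < rank (L ++ nq) (a x)) ||
  ((rank (L ++ nq) (discoverer y) == rank (L ++ nq) (a x)) &&
   (offset (L ++ nq) (discoverer y) <= offset (L ++ nq) (a x))).
Proof.
rewrite behead_queue mem_cat map_rcons mem_rcons inE => /orP[yL | yn] xy.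
  case/orP=> [/eqP ax | axD].
    by rewrite (rank_at_start ax) rank_dead // (inv_parent_dead I yL).1.
  have [pL axL] := (vtx_parent_queue yL, vtx_dead_queue axD).
  by rewrite !rank_queue // !offset_queue //; exact: (inv_parent_first I yL xy axD).
case/orP=> [/eqP ax | axD].
  rewrite !rank_at_start ?vtx_discoverer_new // eqxx ltnn /=.
  rewrite !offset_at_start ?vtx_discoverer_new //.
  by apply: (scan_first J) => //; rewrite mem_orbit_start ax.
have := inv_dead_closed I axD; rewrite aK (inv_visited I) inE xy.
by rewrite (negPf (vtx_new_notin yn)).
Qed.

Lemma dequeue_parent_fifo y y' : y \in behead (L ++ nq) -> y' \in behead (L ++ nq) ->
  rank (L ++ nq) y < rank (L ++ nq) y' ->
  (rank (L ++ nq) (discoverer y) < rank (L ++ nq) (discoverer y')) ||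
  ((rank (L ++ nq) (discoverer y) == rank (L ++ nq) (discoverer y')) &&
   (offset (L ++ nq) (discoverer y) < offset (L ++ nq) (discoverer y'))).
Proof.
rewrite !behead_queue !mem_cat => /orP[yL | yn] /orP[y'L | y'n].
- have [vy vy'] := (vtx_behead_queue yL, vtx_behead_queue y'L).
  have [py py'] := (vtx_parent_queue yL, vtx_parent_queue y'L).
  rewrite !rank_queue // !offset_queue //; exact: (inv_parent_fifo I yL y'L).
- move=> _; rewrite (rank_at_start (vtx_discoverer_new y'n)) rank_dead //.
  exact: (inv_parent_dead I yL).1.
- rewrite (rank_new yn) ltnNge ltnW //.
  exact: leq_trans (rank_old (vtx_behead_queue y'L)) (leq_addr _ _).
- rewrite (rank_new yn) (rank_new y'n) ltn_add2l => lt.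
  rewrite !rank_at_start ?vtx_discoverer_new // eqxx ltnn /=.
  rewrite !offset_at_start ?vtx_discoverer_new //.
  by have := scan_sorted J lt; rewrite !nth_index //; apply; rewrite index_mem.
Qed.

Lemma bfs_inv_dequeue : bfs_inv (rcons D st) (q0 ++ nq) vis T.
Proof.
have EL : rcons D st ++ (q0 ++ nq) = L ++ nq by rewrite cat_rcons /L -catA.
split; rewrite ?EL.
- have [r_head L_nonempty] := inv_head I.
  by rewrite nth_cat L_nonempty size_cat addn_gt0 L_nonempty.
- exact: scan_uniq J.
- exact: scan_visited J.
- exact: scan_tree J.
- exact: dequeue_parent_dead.
- exact: dequeue_parent_first.
- exact: dequeue_parent_fifo.
- move=> x; rewrite map_rcons mem_rcons inE => /orP[/eqP vx | xD].
    by apply: (scan_closed J); rewrite mem_orbit_start vx.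
  have := inv_dead_closed I xD.
  by rewrite (inv_visited I) (scan_visited J) !inE -/L map_cat mem_cat => ->.
Qed.

End ScanDone.
End Scan.

(* The dequeued vertices are pairwise distinct, so [#|H|] rounds of fuel
   empty the queue. *)
Lemma bfs_inv_trace n D q vis T : bfs_inv D q vis T -> #|H| <= size D + n ->
  exists vis', bfs_inv (bfs_trace n q vis T D).2 [::] vis' (bfs_trace n q vis T D).1.
Proof.
elim: n D q vis T => [|n IH] D q vis T I.
  rewrite addn0 => enough; exists vis; suff q0 : q = [::] by move: I; rewrite q0.
  have := size_uniq_vtx (inv_uniq I); rewrite size_cat.
  case: q {I} => //= x q; rewrite addnS => size_le.
  by move: (leq_trans size_le enough); rewrite ltnNge leq_addr.
case: q I => [|st q0] I enough; first by exists vis.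
have := @scan_inv_fold D q0 st _ [::] vis T [::] (erefl _) (scan_inv_init I).
rewrite /= /orbit.
case: (foldl _ _ _) => [[vis' T'] nq] J.
by apply: IH; [exact: bfs_inv_dequeue I J | rewrite size_rcons addSnnS].
Qed.

Lemma bfs_inv_init : bfs_inv [::] [:: r] [set x | fconnect s r x] set0.
Proof.
split => //=.
- apply/setP=> x; rewrite !inE vtx_eqE (fconnect_sym (@perm_inj _ s)).
  by case: (fconnect s r x).
- by move=> x; rewrite inE.
Qed.

Lemma bfs_inv_cover D vis T :
  (forall x y, connect (fun u v => (v == s u) || (v == a u)) x y) ->
  bfs_inv D [::] vis T -> forall h, vtx h \in map vtx D.
Proof.
move=> conn I h.
have closed u v : (v == s u) || (v == a u) -> vtx u \in map vtx D -> vtx v \in map vtx D.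
  case/orP=> /eqP-> uD; first by rewrite vtx_s.
  by have := inv_dead_closed I uD; rewrite (inv_visited I) inE cats0.
have rD : vtx r \in map vtx D.
  have [] := inv_head I; rewrite cats0.
  by case: (D) => //= x D' <- _; rewrite mem_head.
have /connectP [p pth ->] := conn r h.
elim: p r rD pth => //= v p IH u uD /andP[uv pth].
exact: IH (closed _ _ uv uD) pth.
Qed.

End BFS.

Section Tree.
Variables (H : finType) (s a : {perm H}) (r : H) (D : seq H) (vis T : {set H}).
Hypothesis aK : forall h, a (a h) = h.

Local Notation vtx := (vtx s).
Local Notation discoverer := (discoverer s a).
Local Notation rk := (rank s D).
Local Notation offs := (offset s r D).

Hypothesis inv : bfs_inv s a r D [::] vis T.
Hypothesis D_cover : forall h, vtx h \in map vtx D.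

Lemma D_head : nth r D 0 = r.
Proof. by have [] := inv_head inv; rewrite cats0. Qed.

Lemma D_uniq : uniq (map vtx D).
Proof. by have := inv_uniq inv; rewrite cats0. Qed.

Lemma D_cons : D = r :: behead D.
Proof.
have [] := inv_head inv; rewrite cats0.
by case: (D) => //= x D' ->.
Qed.

Lemma tree_starts x : (x \in T) = (s x \in behead D) || (s (a x) \in behead D).
Proof. by rewrite (inv_tree inv) cats0. Qed.

Lemma D_vtx_inj x y : x \in D -> y \in D -> vtx x = vtx y -> x = y.
Proof.
elim: (D) D_uniq => //= z D' IH /andP[zD' uD'].
rewrite !inE => /orP[/eqP-> | xD] /orP[/eqP-> | yD] // xy.
- by move: zD'; rewrite xy map_f.
- by move: zD'; rewrite -xy map_f.
- exact: IH.
Qed.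

(* The BFS tree, read off [D]: a non-root vertex is entered from its parent
   through the half-edge [parent_he], and [tree_he] is its own half-edge on
   that tree edge. *)
Definition start h := nth r D (rk h).
Definition is_root h := rk h == 0.
Definition tree_he h := (s^-1)%g (start h).
Definition parent_he h := a (tree_he h).
Definition upward h := ~~ is_root h && (tree_he h == h).

Lemma offsE h : offs h = findex s (start h) h.
Proof. by []. Qed.

Lemma rk_lt h : rk h < size D.
Proof. by rewrite rank_lt. Qed.

Lemma start_in h : start h \in D.
Proof. by rewrite /start mem_nth // rk_lt. Qed.

Lemma vtx_start h : vtx (start h) = vtx h.
Proof. by rewrite /start (vtx_nth_rank r (D_cover h)). Qed.

Lemma fconnect_start h : fconnect s (start h) h.
Proof. by apply/vtxP; rewrite vtx_start. Qed.

Lemma rk_eq x y : vtx x = vtx y -> rk x = rk y.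
Proof. by rewrite /rank => ->. Qed.

Lemma vtx_rk x y : rk x = rk y -> vtx x = vtx y.
Proof. by move=> xy; rewrite -vtx_start -(vtx_start y) /start xy. Qed.

Lemma start_eq x y : vtx x = vtx y -> start x = start y.
Proof. by rewrite /start => /rk_eq ->. Qed.

Lemma start_id y : y \in D -> start y = y.
Proof. by move=> yD; apply: D_vtx_inj; rewrite ?start_in ?vtx_start. Qed.

Lemma is_rootE h : is_root h = (vtx h == vtx r).
Proof.
have rk_r : rk r = 0 by rewrite /rank D_cons /= eqxx.
apply/idP/eqP => [/eqP rk0 | /rk_eq]; last by rewrite /is_root rk_r => ->.
by apply: vtx_rk; rewrite rk0 rk_r.
Qed.

Lemma is_root_eq x y : vtx x = vtx y -> is_root x = is_root y.
Proof. by rewrite !is_rootE => ->. Qed.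

Lemma start_root h : is_root h -> start h = r.
Proof. by rewrite /is_root /start => /eqP ->; apply: D_head. Qed.

Lemma start_behead h : ~~ is_root h -> start h \in behead D.
Proof.
rewrite /is_root /start; move: (rk_lt h); case: (rk h) => //= k klt _.
rewrite [in X in X \in _]D_cons /= mem_nth // size_behead.
by case: (size D) klt.
Qed.

Lemma vtx_tree_he h : vtx (tree_he h) = vtx h.
Proof. by rewrite /tree_he vtx_sV vtx_start. Qed.

Lemma s_tree_he h : s (tree_he h) = start h.
Proof. by rewrite /tree_he permKV. Qed.

Lemma parent_he_eq x y : vtx x = vtx y -> parent_he x = parent_he y.
Proof. by rewrite /parent_he /tree_he => /start_eq ->. Qed.

Lemma rk_parent_he h : ~~ is_root h -> rk (parent_he h) < rk h.
Proof.
move=> nr; have := inv_parent_dead inv; rewrite cats0 => /(_ _ (start_behead nr)) [_].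
by rewrite (rk_eq (vtx_start h)).
Qed.

Lemma parent_he_first h : ~~ is_root h ->
  (rk (parent_he h) < rk (a h)) ||
  ((rk (parent_he h) == rk (a h)) && (offs (parent_he h) <= offs (a h))).
Proof.
move=> nr; have := inv_parent_first inv; rewrite cats0.
by apply; rewrite ?start_behead ?vtx_start.
Qed.

Lemma parent_he_fifo x y : ~~ is_root x -> ~~ is_root y -> rk x < rk y ->
  (rk (parent_he x) < rk (parent_he y)) ||
  ((rk (parent_he x) == rk (parent_he y)) && (offs (parent_he x) < offs (parent_he y))).
Proof.
move=> nx ny xy; have := inv_parent_fifo inv; rewrite cats0.
by apply; rewrite ?start_behead // (rk_eq (vtx_start x)) (rk_eq (vtx_start y)).
Qed.

Lemma tree_ind (P : H -> Prop) :
  (forall h, (~~ is_root h -> P (parent_he h)) -> P h) -> forall h, P h.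
Proof.
move=> IH h; have [k] := ubnP (rk h); elim: k h => // k IHk x xk.
by apply: IH => nr; apply: IHk; apply: leq_trans (rk_parent_he nr) _; rewrite -ltnS.
Qed.

Lemma start_beheadE h : (s h \in behead D) = upward h.
Proof.
apply/idP/idP => [sD | /andP[nr /eqP <-]]; last by rewrite s_tree_he start_behead.
have start_sh : start h = s h.
  by rewrite -(start_eq (vtx_s s h)) start_id // D_cons inE sD orbT.
rewrite /upward /tree_he start_sh permK eqxx andbT is_rootE -(vtx_s s h).
apply: contraTneq sD => sr; move: D_uniq; rewrite D_cons /= => /andP[rD _].
by apply: contra rD => /(map_f vtx); rewrite sr.
Qed.

Lemma in_treeE x : (x \in T) = upward x || upward (a x).
Proof. by rewrite tree_starts !start_beheadE. Qed.

Lemma in_tree_a x : (a x \in T) = (x \in T).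
Proof. by rewrite !in_treeE aK orbC. Qed.

Lemma upward_not_root h : upward h -> ~~ is_root h.
Proof. by case/andP. Qed.

Lemma upward_parent_he h : upward h -> parent_he h = a h.
Proof. by rewrite /parent_he => /andP[_ /eqP ->]. Qed.

Lemma upward_start x : ~~ is_root x -> s x = start x -> upward x.
Proof. by move=> nr sx; rewrite /upward nr /tree_he -sx permK eqxx. Qed.

(* [word h] is the address of [h] in the BFS tree: the offsets, around each
   vertex on the tree path from the root vertex, of the half-edge leading
   down the path, followed by the offset of [h] itself. *)
Fixpoint word_fuel n h := if n is n'.+1 then
  (if is_root h then [::] else rcons (word_fuel n' (parent_he h)) (offs (parent_he h)))
  else [::].

Lemma word_fuel_stable n m h : rk h < n -> rk h < m -> word_fuel n h = word_fuel m h.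
Proof.
elim: n m h => [|n IH] [|m] h //= hn hm.
case: ifP => // nr; have := rk_parent_he (negbT nr) => lt.
by rewrite (IH m) // (leq_trans lt) // -ltnS.
Qed.

Definition vword h := word_fuel (size D) h.
Definition word h := rcons (vword h) (offs h).
Definition depth h := size (vword h).

Lemma vwordE h :
  vword h = if is_root h then [::] else rcons (vword (parent_he h)) (offs (parent_he h)).
Proof.
rewrite /vword; have := rk_lt h; case: (size D) => // n hn.
rewrite [LHS]/=; case: ifP => // /negbT nr; congr rcons.
have lt := rk_parent_he nr.
by apply: word_fuel_stable; [exact: leq_trans lt hn | exact: ltn_trans lt hn].
Qed.

Lemma vword_eq x y : vtx x = vtx y -> vword x = vword y.
Proof.
rewrite /vword; elim: (size D) x y => //= n IH x y xy.
by rewrite (is_root_eq xy) (parent_he_eq xy).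
Qed.

Lemma depth_root h : is_root h -> depth h = 0.
Proof. by rewrite /depth vwordE => ->. Qed.

Lemma depth_parent h : ~~ is_root h -> depth h = (depth (parent_he h)).+1.
Proof. by rewrite /depth vwordE => /negPf ->; rewrite size_rcons. Qed.

Lemma depth_eq x y : vtx x = vtx y -> depth x = depth y.
Proof. by rewrite /depth => /vword_eq ->. Qed.

Lemma depth0_root h : depth h = 0 -> is_root h.
Proof. by case rh: (is_root h) => //; rewrite depth_parent ?rh. Qed.

Lemma upward_depth h : upward h -> depth h = (depth (a h)).+1.
Proof. by move=> u; rewrite depth_parent ?upward_not_root // upward_parent_he. Qed.

Lemma upward_vword h : upward h -> vword h = word (a h).
Proof. by move=> u; rewrite vwordE (negPf (upward_not_root u)) upward_parent_he. Qed.

Lemma upward_aN h : upward h -> ~~ upward (a h).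
Proof.
move=> u; apply/negP => /upward_depth; rewrite aK (upward_depth u) => E.
by have := leqnSn (depth (a h)).+1; rewrite -E ltnn.
Qed.

(* FIFO order of the queue makes the depth monotone in the rank. *)
Lemma depth_mono x y : rk x <= rk y -> depth x <= depth y.
Proof.
have [n] := ubnP (rk y); elim: n x y => // n IH x y yn xy.
case rx: (is_root x); first by rewrite depth_root.
have ry : ~~ is_root y.
  by apply: contraFN rx; rewrite /is_root => /eqP y0; move: xy; rewrite y0 leqn0.
move: xy; rewrite leq_eqVlt => /orP[/eqP/vtx_rk/depth_eq-> // | xy].
rewrite (depth_parent (negbT rx)) (depth_parent ry) ltnS; apply: IH.
  exact: leq_trans (rk_parent_he ry) _.
by case/orP: (parent_he_fifo (negbT rx) ry xy) => [/ltnW | /andP[/eqP-> _]].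
Qed.

Lemma depth_edge h : depth h <= (depth (a h)).+1.
Proof.
case rh: (is_root h); first by rewrite depth_root.
rewrite depth_parent ?rh // ltnS; apply: depth_mono.
by case/orP: (parent_he_first (negbT rh)) => [/ltnW | /andP[/eqP-> _]].
Qed.

Lemma depth_le_rk h : depth h <= rk h.
Proof.
elim/tree_ind: h => h IH; case rh: (is_root h); first by rewrite depth_root.
by rewrite depth_parent ?rh //; apply: leq_ltn_trans (IH _) (rk_parent_he _); rewrite rh.
Qed.

Lemma depth_lt_card h : depth h < #|H|.
Proof.
apply: leq_ltn_trans (depth_le_rk h) _.
exact: leq_trans (rk_lt h) (size_uniq_vtx D_uniq).
Qed.

Lemma reachS n : reach s a r n.+1 =
  reach s a r n :|: [set h | [exists h' in reach s a r n, fconnect s (a h') h]].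
Proof. by []. Qed.

Lemma depth_reach n h : h \in reach s a r n -> depth h <= n.
Proof.
elim: n h => [|n IH] h.
  by rewrite /reach /= inE => /vtxP rh; rewrite depth_root // is_rootE rh.
rewrite reachS !inE => /orP[/IH /leqW // | /existsP[h' /andP[h'n /vtxP h'h]]].
rewrite -(depth_eq h'h); apply: leq_trans (depth_edge _) _.
by rewrite aK ltnS IH.
Qed.

Lemma mem_reach_depth h : h \in reach s a r (depth h).
Proof.
elim/tree_ind: h => h IH; case rh: (is_root h).
  rewrite depth_root // /reach /= inE; apply/vtxP.
  by move: rh; rewrite is_rootE => /eqP.
rewrite depth_parent ?rh // reachS !inE; apply/orP; right.
apply/existsP; exists (parent_he h); rewrite IH ?rh //=.
by apply/vtxP; rewrite /parent_he aK vtx_tree_he.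
Qed.

Lemma dist_depth h : dist s a r h = depth h.
Proof.
rewrite /dist; set p := fun n => h \in reach s a r n.
have hasp : has p (iota 0 #|H|).
  apply/hasP; exists (depth h); last exact: mem_reach_depth.
  by rewrite mem_iota depth_lt_card.
have le_depth : find p (iota 0 #|H|) <= depth h.
  rewrite leqNgt; apply/negP => lt.
  by have := before_find 0 lt; rewrite nth_iota ?depth_lt_card // add0n /p mem_reach_depth.
apply/eqP; rewrite eqn_leq le_depth /=.
have := nth_find 0 hasp; rewrite nth_iota ?(leq_ltn_trans le_depth (depth_lt_card h)) //.
by rewrite add0n; apply: depth_reach.
Qed.

Section Bipartite.
Variable c : H -> bool.
Hypothesis colour_s : forall h, c (s h) = c h.
Hypothesis colour_a_neq : forall h, c (a h) != c h.

Lemma colour_vtx x y : fconnect s x y -> c x = c y.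
Proof.
by move=> xy; apply: (fconnect_invariant _ xy) => z; rewrite /invariant /= colour_s eqxx.
Qed.

Lemma colour_depth h : c h = c r (+) odd (depth h).
Proof.
elim/tree_ind: h => h IH; case rh: (is_root h).
  rewrite depth_root // addbF; apply/esym/colour_vtx/vtxP.
  by move: rh; rewrite is_rootE => /eqP.
rewrite depth_parent ?rh // oddS.
have -> : c h = c (tree_he h) by apply/colour_vtx/vtxP; rewrite vtx_tree_he.
have := colour_a_neq (tree_he h); rewrite -/(parent_he h) IH ?rh //.
by case: (c r); case: (odd _); case: (c (tree_he h)).
Qed.

Lemma depth_a h : (depth (a h) == (depth h).+1) || (depth h == (depth (a h)).+1).
Proof.
have e1 := depth_edge h; have e2 := depth_edge (a h); rewrite aK in e2.
have ne : depth (a h) != depth h.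
  apply: contra_neq (colour_a_neq h) => E.
  by rewrite (colour_depth h) (colour_depth (a h)) E.
case: (ltngtP (depth (a h)) (depth h)) ne => // lt _.
  by rewrite orbC eqn_leq e1 lt.
by rewrite eqn_leq e2 lt.
Qed.

End Bipartite.

Lemma offs_s h : offs (s h) = if s h == start h then 0 else (offs h).+1.
Proof.
by rewrite !offsE (start_eq (vtx_s s h)) (findexS (@perm_inj _ s) (fconnect_start h)).
Qed.

Lemma word_theta h : theta s a T h != r -> (word h < word (theta s a T h))%O.
Proof.
rewrite /theta in_treeE; case uh: (upward h) => /=.
  move=> ne; rewrite /word (vword_eq (vtx_s s (a h))) offs_s (upward_vword uh) /word.
  case: ifP => [/eqP sa | _]; last exact: ltxi_rcons_succ.
  case ra: (is_root (a h)); first by move: ne; rewrite sa start_root // eqxx.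
  by move: (upward_aN uh); rewrite (upward_start (negbT ra) sa).
case ua: (upward (a h)) => /= ne.
  have sa : s (a h) = start (a h) by rewrite -s_tree_he; case/andP: ua => _ /eqP ->.
  rewrite /word (vword_eq (vtx_s s (a h))) offs_s sa eqxx (upward_vword ua) aK.
  exact: ltxi_rcons.
rewrite /word (vword_eq (vtx_s s h)) offs_s.
case: ifP => [/eqP sh | _]; last by rewrite ltxi_rcons2.
case rh: (is_root h); first by move: ne; rewrite sh start_root // eqxx.
by move: uh; rewrite (upward_start (negbT rh) sh).
Qed.

Lemma theta_inj : injective (theta s a T).
Proof.
move=> x y; rewrite /theta.
case xT: (x \in T); case yT: (y \in T) => /perm_inj xy //.
- exact: perm_inj xy.
- by move: yT; rewrite -xy in_tree_a xT.
- by move: xT; rewrite xy in_tree_a yT.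
Qed.

Lemma vword_rk_lt x y : rk x < rk y -> depth x = depth y -> (vword x < vword y)%O.
Proof.
have [n] := ubnP (rk y); elim: n x y => // n IH x y yn xy E.
have ry : ~~ is_root y by rewrite /is_root -lt0n (leq_ltn_trans (leq0n _) xy).
have rx : ~~ is_root x by apply/negP => /depth_root; rewrite E => /depth0_root; apply/negP.
have Ep : depth (parent_he x) = depth (parent_he y).
  by move: E; rewrite (depth_parent rx) (depth_parent ry) => -[].
rewrite (vwordE x) (vwordE y) (negPf rx) (negPf ry).
case/orP: (parent_he_fifo rx ry xy) => [lt | /andP[/eqP eq_rk lt]].
  rewrite -!cats1; apply: ltxi_cat_size; first exact: Ep.
  by apply: IH => //; apply: leq_trans (rk_parent_he ry) _.
by rewrite (vword_eq (vtx_rk eq_rk)) ltxi_rcons2.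
Qed.

Lemma word_lt_nontree h : ~~ upward h -> ~~ upward (a h) ->
  depth h = (depth (a h)).+1 -> (word h < word (a h))%O.
Proof.
move=> uh ua E.
have nr : ~~ is_root h by apply/negP => /depth_root; rewrite E.
have Ep : depth (parent_he h) = depth (a h) by move: E; rewrite depth_parent // => -[].
rewrite /word (vwordE h) (negPf nr) -!cats1 -catA.
case/orP: (parent_he_first nr) => [lt | /andP[/eqP eq_rk le]].
  by apply: ltxi_cat_size; last apply: vword_rk_lt.
rewrite (vword_eq (vtx_rk eq_rk)) ltxi_catl ltxi_cons !leEnat.
suff lt : offs (parent_he h) < offs (a h) by rewrite implybF -ltnNge lt ltnW.
rewrite ltn_neqAle le andbT; apply: contra uh => /eqP eq_offs.
have eq_start : start (parent_he h) = start (a h) by apply/start_eq/vtx_rk.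
have : parent_he h = a h.
  rewrite -(iter_findex (fconnect_start (parent_he h))).
  rewrite -(iter_findex (fconnect_start (a h))).
  by rewrite eq_start; move: eq_offs; rewrite !offsE eq_start => ->.
by rewrite /parent_he => /perm_inj th; rewrite /upward nr th eqxx.
Qed.

Lemma Iset_tree_geo (c : H -> bool) :
  (forall h, c (s h) = c h) -> (forall h, c (a h) != c h) ->
  Iset s a r T = geo_in s a r.
Proof.
move=> cs ca; apply/setP => h; rewrite !inE /precS.
rewrite !(findex_potentialE theta_inj word_theta) !dist_depth in_treeE.
case uh: (upward h) => /=.
  by rewrite /word (upward_vword uh) ltxi_rcons (upward_depth uh) ltnSn.
case ua: (upward (a h)) => /=.
  rewrite /word (upward_vword ua) aK (lt_gtF (ltxi_rcons _ _)) (upward_depth ua) aK.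
  by rewrite ltnNge leqnSn.
case/orP: (depth_a cs ca h) => /eqP E.
  have := @word_lt_nontree (a h); rewrite aK ua uh => /(_ isT isT E) /lt_gtF ->.
  by rewrite E ltnNge leqnSn.
by rewrite (word_lt_nontree (negbT uh) (negbT ua) E) E ltnSn.
Qed.

End Tree.

Section IsetInjective.
Variables (H : finType) (s a : {perm H}) (r : H) (S T : {set H}).
Hypothesis a_neq : forall h, a h != h.
Hypothesis thetaT_cyclic : forall h, fconnect (theta s a T) r h.
Hypothesis Iset_eq : Iset s a r S = Iset s a r T.

Local Notation thS := (theta s a S).
Local Notation thT := (theta s a T).
Local Notation fS := (findex thS r).
Local Notation fT := (findex thT r).

Lemma order_thetaT : order thT r = #|H|.
Proof. by apply: eq_card => x; rewrite !inE thetaT_cyclic. Qed.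

Lemma findexT_lt x : fT x < #|H|.
Proof. by rewrite -order_thetaT findex_max. Qed.

Lemma findexT_inj x y : fT x = fT y -> x = y.
Proof. by move=> E; rewrite -(iter_findex (thetaT_cyclic x)) E iter_findex. Qed.

Lemma iter_thetaT_inj i j : i < #|H| -> j < #|H| -> iter i thT r = iter j thT r -> i = j.
Proof. by rewrite -order_thetaT => il jl E; rewrite -(findex_iter il) E findex_iter. Qed.

Section Prefix.
Variable t : nat.
Hypothesis t_lt : t < #|H|.
Hypothesis agree : forall i, i <= t -> iter i thS r = iter i thT r.

Lemma order_thetaS_gt : t < order thS r.
Proof.
rewrite ltnNge; apply/negP => o_le.
have /trajectP [i il E] := looping_order thS r.
rewrite (agree o_le) (agree (leq_trans (ltnW il) o_le)) in E.
have o_lt := leq_ltn_trans o_le t_lt.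
by have := iter_thetaT_inj o_lt (ltn_trans il o_lt) E => Ei; rewrite Ei ltnn in il.
Qed.

Lemma findex_agree x : fT x <= t -> fS x = fT x.
Proof.
move=> le_t; rewrite -{1}(iter_findex (thetaT_cyclic x)) -agree //.
by rewrite findex_iter // (leq_ltn_trans le_t order_thetaS_gt).
Qed.

Lemma findex_agree_gt x : t < fT x -> t < fS x.
Proof.
move=> gt_t; case fx: (fconnect thS r x); last first.
  by rewrite /findex memNindex ?size_orbit -?fconnect_orbit ?fx // order_thetaS_gt.
rewrite ltnNge; apply/negP => le_t; move: gt_t.
have lt_o : fS x < order thT r by rewrite order_thetaT (leq_ltn_trans le_t t_lt).
by rewrite -(iter_findex fx) (agree le_t) (findex_iter lt_o) ltnNge le_t.
Qed.

Lemma precS_agree x y : fT x <= t -> precS s a r S x y = precS s a r T x y.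
Proof.
move=> le_t; rewrite /precS (findex_agree le_t).
have [le_y | gt_y] := leqP (fT y) t; first by rewrite (findex_agree le_y).
by rewrite (leq_ltn_trans le_t gt_y) (leq_ltn_trans le_t (findex_agree_gt gt_y)).
Qed.

Lemma precS_agree_r x y : fT y <= t -> precS s a r S x y = precS s a r T x y.
Proof.
move=> le_t; have [le_x | gt_x] := leqP (fT x) t; first exact: precS_agree.
rewrite /precS (findex_agree le_t) !ltnNge (ltnW (leq_ltn_trans le_t gt_x)).
by rewrite (ltnW (leq_ltn_trans le_t (findex_agree_gt gt_x))).
Qed.

Lemma mem_agree : (iter t thT r \in S) = (iter t thT r \in T).
Proof.
set g := iter t thT r.
have fg : fT g = t by rewrite findex_iter // order_thetaT.
have before_a : precS s a r T (a g) g = ~~ precS s a r T g (a g).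
  rewrite /precS -leqNgt ltn_neqAle andb_idl // => _.
  by apply: contra_neq (a_neq g) => /findexT_inj.
have := congr1 (fun X : {set H} => g \in X) Iset_eq; rewrite /= !inE.
rewrite (precS_agree_r _ (eq_leq fg)) (precS_agree _ (eq_leq fg)) before_a.
by case: (g \in S); case: (g \in T); case: precS.
Qed.

End Prefix.

Lemma iter_agree t : t < #|H| -> forall i, i <= t -> iter i thS r = iter i thT r.
Proof.
elim: t => [|t IH] t_lt i; first by rewrite leqn0 => /eqP->.
have agree := IH (ltnW t_lt).
rewrite leq_eqVlt => /orP[/eqP-> | /agree //].
by rewrite !iterS (agree t (leqnn t)) /theta mem_agree // ltnW.
Qed.

Lemma Iset_inj : S = T.
Proof.
apply/setP => h; have ft := findexT_lt h.
by rewrite -(iter_findex (thetaT_cyclic h)) (mem_agree ft (iter_agree ft)).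
Qed.

End IsetInjective.

Lemma rbfs_tree_geodesic (H : finType) (s a : {perm H}) (r : H) :
  is_map s a -> bipartite s a ->
  let T := rbfs_tree s a r in
  Iset s a r T = geo_in s a r /\ forall h, fconnect (theta s a T) r h.
Proof.
move=> [aK _ conn] [c [cs ca]] T.
have [vis I] := bfs_inv_trace aK (bfs_inv_init s a r) (leqnn #|H|).
rewrite bfs_trace_tree -/(rbfs_tree s a r) -/T in I.
have cover := bfs_inv_cover conn I.
split; first exact: Iset_tree_geo aK I cover _ cs ca.
exact: fconnect_potential (theta_inj aK I cover) (word_theta aK I cover).
Qed.

Theorem mainTheorem15 (H : finType) (s a : {perm H}) (r : H) (S : {set H}) :
  is_map s a -> covered s a S -> bipartite s a ->
  (Iset s a r S = geo_in s a r <-> S = rbfs_tree s a r).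
Proof.
move=> M _ bip; have [tree_geo theta_cyclic] := rbfs_tree_geodesic r M bip.
split=> [I_geo | ->] //.
case: M => _ a_neq _; apply: (Iset_inj a_neq theta_cyclic).
by rewrite I_geo tree_geo.
Qed.
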